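(* For every $\Delta, m \in \mathbb{Z}_{>0}$, we have \[ h(\Delta,m) \leq h(1,m) + (\Delta-1)\cdot h_s^{\Delta}(m). \] In particular, $h(\Delta,m) \leq h(1,m) + (\Delta-1)\cdot h_s(m)$.
   Context: For a real matrix $A \in \mathbb{R}^{m\times n}$ and $1 \le k \le \min\{m,n\}$, let $\Delta_k(A)$ denote the maximum of $|\det(B)|$ over all $k\times k$ submatrices $B$ of $A$. A matrix is called totally $1$-submodular if every square submatrix (of every size) has determinant of absolute value at most $1$. The generalized Heller constant $h(\Delta,m)$ is the maximum $n$ such that some $A \in \mathbb{Z}^{m\times n}$ with pairwise distinct columns has $\Delta_m(A)=\Delta$. For $t \in \mathbb{R}^m$ and $A\in\mathbb{R}^{m\times n}$ with columns $A_1,\dots,A_n$, $t+A$ denotes the matrix with columns $t+A_1,\dots,t+A_n$. The shifted Heller constant $h_s(m)$ is the maximum $n$ such that there exist $t \in [0,1)^m\setminus\{\mathbf 0\}$ and $A \in \{-1,0,1\}^{m\times n}$ with pairwise distinct columns such that $t+A$ is totally $1$-submodular. For an integer $\delta \ge 2$, the refined shifted Heller constant $h_s^{\delta}(m)$ is defined in the same way but with $t$ restricted to $[0,1)^m \cap (\tfrac{1}{\delta}\mathbb{Z})^m \setminus\{\mathbf 0\}$. (When $\Delta = 1$ the second summand has coefficient $\Delta-1=0$ and is interpreted as $0$.) *)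

From HB Require Import structures.
From mathcomp Require Import all_boot all_order all_algebra.
From mathcomp Require Import Rstruct.
From Stdlib Require Rdefinitions.
Notation R := Rdefinitions.R.
Set Implicit Arguments. Unset Strict Implicit. Unset Printing Implicit Defensive.
Import Order.TTheory GRing.Theory Num.Theory.
Local Open Scope ring_scope.

Definition distinct_cols (T : Type) (m n : nat) (A : 'M[T]_(m, n)) : Prop :=
  forall j1 j2 : 'I_n, col j1 A = col j2 A -> j1 = j2.

(* Delta_k(A) = D for an integer matrix, with k = m (all rows):
   the maximum of |det B| over all m x m submatrices B (choice of m distinct
   columns) equals D.  This presupposes that such a submatrix exists
   (i.e. m <= n), as Delta_m is only defined for m <= min(m,n). *)
Definition Delta_full_eq (m n : nat) (A : 'M[int]_(m, n)) (D : int) : Prop :=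
  (exists g : 'I_m -> 'I_n, injective g /\ `|\det (colsub g A)| = D) /\
  (forall g : 'I_m -> 'I_n, injective g -> `|\det (colsub g A)| <= D).

Definition totally_1_submodular (F : numDomainType) (m n : nat)
    (B : 'M[F]_(m, n)) : Prop :=
  forall (k : nat) (f : 'I_k -> 'I_m) (g : 'I_k -> 'I_n),
    injective f -> injective g -> `|\det (mxsub f g B)| <= 1.

Definition shift_mx (m n : nat) (t : 'cV[R]_m) (A : 'M[int]_(m, n)) : 'M[R]_(m, n) :=
  \matrix_(i, j) (t i 0 + (A i j)%:~R).

Definition entries_pm1 (m n : nat) (A : 'M[int]_(m, n)) : Prop :=
  forall i j, A i j \in [:: -1; 0; 1].

Definition in_unit_box (m : nat) (t : 'cV[R]_m) : Prop :=
  (forall i, 0 <= t i 0 /\ t i 0 < 1) /\ t != 0.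

(* n is admissible for h(D, m): some A in Z^{m x n} with pairwise distinct
   columns and Delta_m(A) = D.  h(D,m) is the maximum of such n. *)
Definition heller_adm (D m n : nat) : Prop :=
  exists A : 'M[int]_(m, n), distinct_cols A /\ Delta_full_eq A D%:Z.

(* n is admissible for h_s(m); h_s(m) is the maximum of such n. *)
Definition shifted_adm (m n : nat) : Prop :=
  exists (t : 'cV[R]_m) (A : 'M[int]_(m, n)),
    in_unit_box t /\ entries_pm1 A /\ distinct_cols A /\
    totally_1_submodular (shift_mx t A).

(* n is admissible for h_s^delta(m) (delta >= 2): as above, with
   t in (1/delta) Z^m; h_s^delta(m) is the maximum of such n. *)
Definition refined_shifted_adm (delta m n : nat) : Prop :=
  (2 <= delta)%N /\
  exists (t : 'cV[R]_m) (A : 'M[int]_(m, n)),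
    in_unit_box t /\
    (forall i, exists z : int, t i 0 = z%:~R / delta%:R) /\
    entries_pm1 A /\ distinct_cols A /\
    totally_1_submodular (shift_mx t A).

From mathcomp Require Import all_boot all_order all_algebra.
From mathcomp Require Import Rstruct.
From mathcomp Require Import perm zify ring.

(* Pick columns [B] of [A] with [|det B| = D] and pass to [Y = D B^-1 A]: it is
   integral, contains [D I] among its columns, and all of its k x k minors are
   at most [D^k].  Sort the columns of [Y] by their residues modulo [D]; since
   residues are constant on cosets of [B Z^m], which has index [D], at most [D]
   residues occur.  The zero class, divided by [D], is a unimodular matrix
   containing [I], so it has at most [h(1,m)] columns.  A nonzero residue [c]
   gives columns [Y = c + D Z] with [Z] in [{-1,0,1}], and [c/D + Z = Y/D] has all
   minors at most 1, so its class has at most [h_s^D(m)] columns. *)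

Set Implicit Arguments.
Unset Strict Implicit.
Unset Printing Implicit Defensive.
Import Order.TTheory GRing.Theory Num.Theory.
Local Open Scope ring_scope.

Lemma leq_card_codom_factor (T T1 T2 : finType) (f : T -> T1) (g : T -> T2) :
  (forall x y, g x = g y -> f x = f y) -> (#|codom f| <= #|codom g|)%N.
Proof.
move=> fg; case: (pickP (fun _ : T => true)) => [x0 _|T0]; last first.
  apply: leq_trans (card_size _) _; rewrite size_codom.
  by rewrite (@eq_card0 _ T) // => x; rewrite inE T0.
pose F y := f (odflt x0 [pick x | g x == y]).
have fFg x : f x = F (g x).
  by rewrite /F; case: pickP => [x' /eqP/fg -> | /(_ x)]; rewrite ?eqxx.
apply: (leq_trans _ (leq_image_card F (mem (codom g)))).
apply/subset_leq_card/subsetP => _ /codomP [x ->].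
by rewrite fFg; apply/imageP; exists (g x); rewrite ?codom_f.
Qed.

Lemma card_le_fiber_max (I C : finType) (cls : I -> C) (c0 : C) (D : nat) :
  c0 \in codom cls -> (#|codom cls| <= D)%N ->
  (#|I| <= #|[set i | cls i == c0]|
           + (D - 1) * \max_(c | c != c0) #|[set i | cls i == c]|)%N.
Proof.
move=> c0_in card_cls; set M := \max_(c | c != c0) _.
have -> : #|I| = (\sum_c #|[set i | cls i == c]|)%N.
  rewrite -sum1_card (partition_big cls predT) //=.
  by apply: eq_bigr => c _; rewrite sum1_card cardsE.
rewrite (bigD1 c0) //= leq_add2l.
apply: (@leq_trans (\sum_(c | (c != c0) && (c \in codom cls)) M)).
  rewrite [leqRHS]big_mkcondr /=; apply: leq_sum => c c_neq.
  case: ifP => [_|c_out].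
    exact: (@leq_bigmax_cond _ (fun c => c != c0) (fun c => #|[set i | cls i == c]|)).
  rewrite leqn0 cards_eq0; apply/eqP/setP => i; rewrite !inE.
  by apply: contraFF c_out => /eqP <-; exact: codom_f.
rewrite sum_nat_const leq_mul2r; apply/orP; right.
move: card_cls; rewrite [#|codom cls|](cardD1 c0) c0_in.
have -> : #|[pred c | (c != c0) && (c \in codom cls)]| = #|[predD1 codom cls & c0]|.
  by apply: eq_card => c; rewrite !inE.
lia.
Qed.

Lemma diag_mx_dvdz m (d : seq int) (v : 'cV[int]_m) :
  (forall i, (d`_i %| v i 0%R)%Z) ->
  exists w : 'cV_m, diag_mx (\row_i d`_i) *m w = v.
Proof.
move=> dv; exists (\col_i (v i 0%R %/ d`_i)%Z); apply/matrixP => i k.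
by rewrite ord1 mul_diag_mx !mxE mulrC divzK.
Qed.

(* [Z^m / B Z^m] has [|det B|] elements: by the Smith normal form [B = P S Q], the
   coset of [x] is determined by the residues of [P^-1 x] modulo the invariant
   factors [S_ii]. *)
Lemma card_codom_coset_invariant m n (B : 'M[int]_m) (A : 'M[int]_(m, n))
    (T : finType) (f : 'I_n -> T) :
  \det B != 0 ->
  (forall j j' (w : 'cV_m), col j A - col j' A = B *m w -> f j = f j') ->
  (#|codom f| <= `|\det B|)%N.
Proof.
move=> detB_neq0 f_coset.
have [P P_unit [Q Q_unit [d _ defB]]] := int_Smith_normal_form B.
have {}defB : B = P *m diag_mx (\row_i d`_i) *m Q.
  by rewrite defB; congr (_ *m _ *m _); apply/matrixP => i j; rewrite !mxE.
have normz_unit (M : 'M[int]_m) : M \in unitmx -> `|\det M|%N = 1%N.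
  by rewrite unitmxE => /orP [] /eqP ->.
pose a (i : 'I_m) : nat := absz d`_i.
have normB : `|\det B|%N = (\prod_i a i)%N.
  rewrite defB !det_mulmx det_diag !abszM (big_morph _ abszM (erefl : `|1|%N = 1%N)) /=.
  by rewrite !normz_unit // mul1n muln1; apply: eq_bigr => i _; rewrite mxE.
have d_neq0 (i : 'I_m) : d`_i != 0.
  apply: contra detB_neq0 => /eqP di0.
  by rewrite defB !det_mulmx det_diag (bigD1 i) //= mxE di0 !(mul0r, mulr0).
pose u := invmx P *m A.
have mod_lt (i : 'I_m) (j : 'I_n) : (`|(u i j %% d`_i)%Z| < a i)%N.
  by rewrite /a; have := ltz_mod (u i j) (d_neq0 i); have := modz_ge0 (u i j) (d_neq0 i); lia.
pose psi j : {dffun forall i : 'I_m, 'I_(a i)} := [ffun i => Ordinal (mod_lt i j)].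
apply: leq_trans (@leq_card_codom_factor _ _ _ f psi _) _.
  move=> j j' /ffunP psi_eq.
  have [w dw] : exists w : 'cV_m, diag_mx (\row_i d`_i) *m w = col j u - col j' u.
    have col_diff i : (col j u - col j' u) i 0 = u i j - u i j' by rewrite !mxE.
    apply: diag_mx_dvdz => i; rewrite col_diff -eqz_mod_dvd; apply/eqP.
    have := congr1 val (psi_eq i); rewrite !ffunE /=.
    by have := modz_ge0 (u i j) (d_neq0 i); have := modz_ge0 (u i j') (d_neq0 i); lia.
  apply: (f_coset j j' (invmx Q *m w)).
  by rewrite defB -!mulmxA mulKVmx // dw !colE /u -!mulmxA -!mulmxBr mulKVmx.
apply: leq_trans (max_card _) _; rewrite card_dep_ffun normB foldrE big_map big_enum /=.
by apply: eq_leq; apply: eq_bigr => i _; rewrite card_ord.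
Qed.

Section UnitColumnMinors.
Variables (K : numDomainType) (m n : nat) (Y : 'M[K]_(m, n)).

Lemma normr_det_mxsub_full (f : 'I_m -> 'I_m) (g : 'I_m -> 'I_n) :
  injective f -> `|\det (mxsub f g Y)| = `|\det (colsub g Y)|.
Proof.
move=> f_inj; have -> : mxsub f g Y = row_perm (perm f_inj) (colsub g Y).
  by apply/matrixP => i j; rewrite !mxE permE.
by rewrite row_permE det_mulmx det_perm normrM normrX normrN1 expr1n mul1r.
Qed.

Variables (c : K) (e : 'I_m -> 'I_n).
Hypothesis Y_unit_col : forall i r, Y i (e r) = c * (i == r)%:R.

Lemma det_mxsub_border k (f : 'I_k -> 'I_m) (g : 'I_k -> 'I_n) (r : 'I_m) :
  injective f -> injective g -> r \notin codom f -> e r \notin codom g ->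
  exists (f' : 'I_(k + 1) -> 'I_m) (g' : 'I_(k + 1) -> 'I_n),
    [/\ injective f', injective g' & \det (mxsub f' g' Y) = \det (mxsub f g Y) * c].
Proof.
move=> f_inj g_inj r_f er_g.
pose ext (T : finType) (h : 'I_k -> T) x (i : 'I_(k + 1)) :=
  if split i is inl a then h a else x.
have ext_inj (T : finType) (h : 'I_k -> T) (x : T) :
    injective h -> x \notin codom h -> injective (ext T h x).
  move=> h_inj x_h i i'; rewrite /ext -[i]splitK -[i']splitK.
  case: (split i) => a; case: (split i') => b; rewrite !unsplitK.
  - by move/h_inj ->.
  - by move=> hax; move: x_h; rewrite -hax codom_f.
  - by move=> hbx; move: x_h; rewrite hbx codom_f.
  - by rewrite !ord1.
have f_r a : f a != r by apply: contraNneq r_f => <-; exact: codom_f.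
exists (ext _ f r), (ext _ g (e r)); split; try exact: ext_inj.
have -> : mxsub (ext _ f r) (ext _ g (e r)) Y =
    block_mx (mxsub f g Y) 0 (\matrix_(i < 1, j < k) Y r (g j)) c%:M.
  apply/matrixP => i j; rewrite -[i]splitK -[j]splitK.
  case: (split i) => a; case: (split j) => b;
    rewrite /block_mx !mxE /ext !unsplitK !mxE ?unsplitK ?mxE //=.
  - by rewrite Y_unit_col (negbTE (f_r _)) mulr0.
  - by rewrite Y_unit_col !ord1 eqxx mulr1n mulr1.
by rewrite det_lblock det_scalar expr1.
Qed.

(* A k-minor either misses a row [r] and meets the unit column [e r] outside its
   rows, hence vanishes, or can be bordered by [r] and [e r] (at the cost of a
   factor [c]); induct on [m - k]. *)
Lemma det_mxsub_unit_col_le :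
  c != 0 ->
  (forall g : 'I_m -> 'I_n, injective g -> `|\det (colsub g Y)| <= `|c| ^+ m) ->
  forall k (f : 'I_k -> 'I_m) (g : 'I_k -> 'I_n), injective f -> injective g ->
    `|\det (mxsub f g Y)| <= `|c| ^+ k.
Proof.
move=> c_neq0 maximal_minor_le k f g.
have [d] := ubnP (m - k); elim: d k f g => // d IH k f g lt_d f_inj g_inj.
have [le_mk|lt_km] := leqP m k.
  have km : k = m by have := leq_card f f_inj; rewrite !card_ord; lia.
  by subst k; rewrite normr_det_mxsub_full //; exact: maximal_minor_le.
have [r r_f] : exists r, r \notin codom f.
  apply/existsP; apply: contraTT lt_km; rewrite negb_exists -leqNgt => /forallP all_f.
  rewrite -{1}(card_ord m) -(card_ord k) -(card_codom f_inj).
  by apply/subset_leq_card/subsetP => x _; exact/negbNE/all_f.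
have [/codomP [a er_ga]|er_g] := boolP (e r \in codom g).
  rewrite (expand_det_col _ a) big1 ?normr0 ?exprn_ge0 // => i _.
  rewrite !mxE -er_ga Y_unit_col (_ : f i == r = false) ?mulr0 ?mul0r //.
  by apply: contraNF r_f => /eqP <-; exact: codom_f.
have [f' [g' [f'_inj g'_inj det_border]]] := det_mxsub_border f_inj g_inj r_f er_g.
have := IH (k + 1)%N f' g' ltac:(lia) f'_inj g'_inj.
by rewrite det_border normrM exprD expr1 ler_pM2r // normr_gt0.
Qed.

End UnitColumnMinors.

Lemma absz_modz_lt (x : int) (d : nat) : (0 < d)%N -> (`|(x %% d%:Z)%Z| < d)%N.
Proof.
by move=> d_gt0; have := ltz_pmod x (d := d%:Z); have := modz_ge0 x (d := d%:Z); lia.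
Qed.

Section ResidueClasses.
Variables (m n D : nat) (Y : 'M[int]_(m, n)) (e : 'I_m -> 'I_n).
Hypotheses (D_gt0 : (0 < D)%N) (Y_distinct : distinct_cols Y)
  (Y_unit_col : forall i r, Y i (e r) = D%:Z * (i == r)%:R)
  (Y_minor_le : forall k (f : 'I_k -> 'I_m) (g : 'I_k -> 'I_n),
     injective f -> injective g -> `|\det (mxsub f g Y)| <= D%:Z ^+ k).

Definition col_residue (j : 'I_n) : {ffun 'I_m -> 'I_D} :=
  [ffun i => Ordinal (absz_modz_lt (Y i j) D_gt0)].

Definition residue0 : {ffun 'I_m -> 'I_D} := [ffun => Ordinal D_gt0].

Definition residue_class (c : {ffun 'I_m -> 'I_D}) := [set j | col_residue j == c].

Definition class_col c (k : 'I_#|residue_class c|) : 'I_n := enum_val k.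
Arguments class_col : clear implicits.

Definition class_quot c : 'M[int]_(m, #|residue_class c|) :=
  \matrix_(i, k) (Y i (class_col c k) %/ D%:Z)%Z.

Lemma class_quotE c i k :
  Y i (class_col c k) = class_quot c i k * D%:Z + (c i : nat)%:Z.
Proof.
rewrite mxE; have : class_col c k \in residue_class c by exact: enum_valP.
move: (class_col c k) => j; rewrite inE => /eqP <-; rewrite ffunE /=.
by rewrite gez0_abs ?modz_ge0 -?divz_eq //; lia.
Qed.

Lemma distinct_cols_class_quot c : distinct_cols (class_quot c).
Proof.
move=> k k' /matrixP eq_kk'; apply/enum_val_inj/Y_distinct/matrixP => i z.
by rewrite !mxE !class_quotE; have := eq_kk' i 0; rewrite !mxE => ->.
Qed.

Lemma Y_entry_le i j : `|Y i j| <= D%:Z.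
Proof.
have := @Y_minor_le 1 (fun _ => i) (fun _ => j).
by rewrite det_mx11 !mxE expr1; apply=> x y _; rewrite !ord1.
Qed.

Lemma unit_col_inj : injective e.
Proof.
move=> r r' err'; apply/eqP; have := Y_unit_col r r'; rewrite -err' Y_unit_col eqxx.
by case: eqP => // _; rewrite mulr1 mulr0; lia.
Qed.

Lemma col_residue_unit_col r : col_residue (e r) = residue0.
Proof.
by apply/ffunP => i; apply/val_inj; rewrite !ffunE /= Y_unit_col mulrC modzMl.
Qed.

Lemma heller_adm_residue0 : heller_adm 1 m #|residue_class residue0|.
Proof.
have e_class0 r : e r \in residue_class residue0 by rewrite inE col_residue_unit_col.
have quot0E i k : Y i (class_col residue0 k) = D%:Z * class_quot residue0 i k.
  by rewrite class_quotE ffunE addr0 mulrC.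
have D_pos : 0 < D%:Z by lia.
have D_neq0 : D%:Z != 0 by lia.
exists (class_quot residue0); split; first exact: distinct_cols_class_quot.
split.
  pose g r := enum_rank_in (e_class0 r) (e r).
  have class_col_g r : class_col residue0 (g r) = e r.
    by rewrite /g /class_col enum_rankK_in.
  exists g; split.
    by move=> r r' /(congr1 (class_col residue0)); rewrite !class_col_g => /unit_col_inj.
  have -> : colsub g (class_quot residue0) = 1%:M.
    by apply/matrixP => i r; rewrite !mxE class_col_g Y_unit_col mulKz.
  by rewrite det1 normr1.
move=> g g_inj.
have := Y_minor_le (@inj_id _) (inj_comp (@enum_val_inj _ _) g_inj).
have -> : mxsub id (class_col residue0 \o g) Y = D%:Z *: colsub g (class_quot residue0).
  by apply/matrixP => i r; rewrite !mxE /= quot0E mulKz.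
rewrite detZ normrM normrX (@ger0_norm _ D%:Z) // -[leRHS]mulr1 ler_pM2l //.
by rewrite exprn_gt0.
Qed.

Lemma refined_shifted_adm_residue c :
  (2 <= D)%N -> c != residue0 -> refined_shifted_adm D m #|residue_class c|.
Proof.
move=> D_ge2 c_neq0; split=> //.
have D_gt0R : 0 < (D%:R : R) by rewrite ltr0n.
pose t : 'cV[R]_m := \col_i (((c i : nat)%:Z)%:~R / D%:R).
exists t, (class_quot c); split; [|split; [|split; [|split]]].
- split=> [i|].
    by rewrite mxE divr_ge0 ?ler0n // ltr_pdivrMr // mul1r ltr_nat.
  apply: contra c_neq0 => /eqP /matrixP t0; apply/eqP/ffunP => i; apply/val_inj.
  have := t0 i 0; rewrite !mxE ffunE => /eqP.
  by rewrite mulf_eq0 invr_eq0 (gt_eqF D_gt0R) orbF intr_eq0 => /eqP [].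
- by move=> i; exists (c i : nat)%:Z; rewrite mxE.
- move=> i k; have := class_quotE i k; have := Y_entry_le i (class_col c k).
  have := ltn_ord (c i).
  move: (class_quot c i k) (Y i _) (c i : nat) => q y ci ci_lt y_le y_eq.
  have q_pm1 : q = -1 \/ q = 0 \/ q = 1 by nia.
  by case: q_pm1 => [|[|]] ->.
- exact: distinct_cols_class_quot.
move=> k f g f_inj g_inj.
have shiftE i k' :
    shift_mx t (class_quot c) i k' = (Y i (class_col c k'))%:~R / D%:R.
  by rewrite class_quotE !mxE intrD intrM; field; rewrite gt_eqF.
have -> : mxsub f g (shift_mx t (class_quot c)) =
    (D%:R : R)^-1 *: map_mx intr (mxsub f (class_col c \o g) Y).
  by apply/matrixP => i j; rewrite mxE shiftE !mxE mulrC.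
rewrite detZ det_map_mx normrM normrX normfV normr_nat exprVn mulrC.
rewrite ler_pdivrMr ?exprn_gt0 // mul1r -intr_norm.
have := Y_minor_le f_inj (inj_comp (@enum_val_inj _ _) g_inj).
by rewrite -(ler_int R) rmorphXn.
Qed.

Lemma residue_class_split :
  (0 < m)%N -> (2 <= D)%N -> (#|codom col_residue| <= D)%N ->
  exists n1 n2, [/\ heller_adm 1 m n1, refined_shifted_adm D m n2
                  & (n <= n1 + (D - 1) * n2)%N].
Proof.
move=> m_gt0 D_ge2 card_residues.
pose c1 : {ffun 'I_m -> 'I_D} := [ffun => Ordinal D_ge2].
have c1_neq0 : c1 != residue0.
  by apply/eqP => /ffunP /(_ (Ordinal m_gt0)) /(congr1 val); rewrite !ffunE.
have nonzero_residue : (0 < #|[pred c | c != residue0]|)%N.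
  by apply/card_gt0P; exists c1.
have [c c_neq0 max_c] := eq_bigmax_cond (fun c => #|residue_class c|) nonzero_residue.
exists #|residue_class residue0|, #|residue_class c|; split.
- exact: heller_adm_residue0.
- exact: refined_shifted_adm_residue.
rewrite -max_c -{1}(card_ord n).
apply: card_le_fiber_max card_residues.
by rewrite -(col_residue_unit_col (Ordinal m_gt0)) codom_f.
Qed.

End ResidueClasses.

Section Normalization.
Variables (m n : nat) (A : 'M[int]_(m, n)) (e : 'I_m -> 'I_n).

(* [|det B| B^-1 A] for [B = colsub e A], written with the adjugate to stay integral. *)
Definition normalized_mx := Num.sg (\det (colsub e A)) *: (\adj (colsub e A) *m A).

Local Notation B := (colsub e A).
Local Notation Y := normalized_mx.

Lemma mul_normalized_mx : B *m Y = `|\det B| *: A.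
Proof. by rewrite -scalemxAr mulmxA mul_mx_adj mul_scalar_mx scalerA -normrEsg. Qed.

Lemma colsub_normalized_mx (k : nat) (g : 'I_k -> 'I_n) :
  colsub g Y = Num.sg (\det B) *: (\adj B *m colsub g A).
Proof.
apply/matrixP => i r; rewrite !mxE; congr (_ * _).
by apply: eq_bigr => x _; rewrite [colsub g A x r]mxE.
Qed.

Lemma normalized_mx_unit_col i r : Y i (e r) = `|\det B| * (i == r)%:R.
Proof.
have := congr1 (fun M : 'M[int]_m => M i r) (colsub_normalized_mx e).
by rewrite mul_adj_mx scale_scalar_mx -normrEsg !mxE mulr_natr => ->.
Qed.

Lemma normr_det_normalized_mx (g : 'I_m -> 'I_n) :
  `|\det (colsub g Y)| * `|\det B| = `|\det B| ^+ m * `|\det (colsub g A)|.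
Proof.
have := congr1 (fun M : 'M[int]_m => `|\det M|) (mul_adj_mx B).
rewrite /= det_mulmx det_scalar !normrM normrX => adjB.
rewrite colsub_normalized_mx detZ det_mulmx !normrM normrX mulrAC -adjB normr_sg.
have [->|detB_neq0] := eqVneq (\det B) 0; first by rewrite !(normr0, mulr0).
by rewrite /= expr1n mul1r; ring.
Qed.

Lemma normalized_mx_col_diff j j' (w : 'cV_m) :
  col j A - col j' A = B *m w -> col j Y - col j' Y = `|\det B| *: w.
Proof.
move=> Aw; rewrite /normalized_mx !colE -!scalemxAl -scalerBr -!mulmxA -mulmxBr.
by rewrite -!colE Aw mulmxA mul_adj_mx mul_scalar_mx scalerA -normrEsg.
Qed.

Lemma distinct_cols_normalized_mx :
  \det B != 0 -> distinct_cols A -> distinct_cols Y.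
Proof.
move=> detB_neq0 A_distinct j j' Yjj'; apply: A_distinct; apply/matrixP => i z.
have : col j (B *m Y) = col j' (B *m Y) by rewrite !colE -!mulmxA -!colE Yjj'.
rewrite mul_normalized_mx => /matrixP /(_ i z); rewrite !mxE; apply: mulfI.
by rewrite normr_eq0.
Qed.

End Normalization.

Lemma heller_adm_split (D m n : nat) :
  (2 <= D)%N -> (0 < m)%N -> heller_adm D m n ->
  exists n1 n2, [/\ heller_adm 1 m n1, refined_shifted_adm D m n2
                  & (n <= n1 + (D - 1) * n2)%N].
Proof.
move=> D_ge2 m_gt0 [A [A_distinct [[e [_ normB]] A_minor_le]]].
have D_gt0 : (0 < D)%N by exact: ltnW.
have D_pos : 0 < D%:Z by lia.
have detB_neq0 : \det (colsub e A) != 0 by rewrite -normr_eq0 normB lt0r_neq0.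
pose Y := normalized_mx A e.
have Y_unit_col i r : Y i (e r) = D%:Z * (i == r)%:R.
  by rewrite normalized_mx_unit_col normB.
have Y_maximal_minor_le g : injective g -> `|\det (colsub g Y)| <= `|D%:Z| ^+ m.
  move=> g_inj; rewrite -(ler_pM2r (_ : 0 < `|\det (colsub e A)|)) ?normr_gt0 //.
  rewrite normr_det_normalized_mx normB (@gtr0_norm _ D%:Z) // mulrC [leRHS]mulrC.
  by rewrite ler_pM2r ?exprn_gt0 //; exact: A_minor_le.
have Y_minor_le k (f : 'I_k -> 'I_m) g : injective f -> injective g ->
    `|\det (mxsub f g Y)| <= D%:Z ^+ k.
  rewrite -[D%:Z]gtr0_norm //.
  exact: (det_mxsub_unit_col_le Y_unit_col (lt0r_neq0 D_pos) Y_maximal_minor_le).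
have Y_distinct := distinct_cols_normalized_mx detB_neq0 A_distinct.
apply: (residue_class_split (D_gt0 := D_gt0) Y_distinct Y_unit_col Y_minor_le m_gt0 D_ge2).
have normB_nat : `|\det (colsub e A)|%N = D by apply/eqP; rewrite -eqz_nat abszE normB.
rewrite -[X in (_ <= X)%N]normB_nat.
apply: card_codom_coset_invariant detB_neq0 _ => j j' w /normalized_mx_col_diff.
rewrite normB => /matrixP Yjj'; apply/ffunP => i; apply/val_inj; rewrite !ffunE /=.
have := Yjj' i 0; rewrite !mxE => /(canRL (addrNK _)) ->.
by rewrite mulrC modzMDl.
Qed.

Lemma refined_shifted_adm_shifted delta m n :
  refined_shifted_adm delta m n -> shifted_adm m n.
Proof. by case=> _ [t [A [t_box [_ A_shift]]]]; exists t, A. Qed.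

Theorem lemma2p3 (D m : nat) :
  (0 < D)%N -> (0 < m)%N ->
  (forall n, heller_adm D m n ->
     exists n1 n2, heller_adm 1 m n1 /\
       (D = 1%N \/ refined_shifted_adm D m n2) /\
       (n <= n1 + (D - 1) * n2)%N) /\
  (forall n, heller_adm D m n ->
     exists n1 n2, heller_adm 1 m n1 /\
       (D = 1%N \/ shifted_adm m n2) /\
       (n <= n1 + (D - 1) * n2)%N).
Proof.
move=> D_gt0 m_gt0.
have refined_bound n : heller_adm D m n -> exists n1 n2, heller_adm 1 m n1 /\
    (D = 1%N \/ refined_shifted_adm D m n2) /\ (n <= n1 + (D - 1) * n2)%N.
  have [D_le1 | D_ge2] := leqP D 1.
    have D1 : D = 1%N by lia.
    by subst D => adm; exists n, 0%N; rewrite muln0 addn0; split; [|split; [left|]].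
  move=> /(heller_adm_split D_ge2 m_gt0) [n1 [n2 [adm1 adm2 bound]]].
  by exists n1, n2; split; [|split; [right|]].
split=> // n /refined_bound [n1 [n2 [adm1 [adm2 bound]]]].
exists n1, n2; split; [|split; [|]] => //.
by case: adm2 => [D1 | /refined_shifted_adm_shifted adm2]; [left | right].
Qed.
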